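(* Let $a,b,c,d$ be non-negative integers with $\gcd(a,b,c,d)=1$ satisfying $(a+b+c+d)^2=2(a^2+b^2+c^2+d^2)$. Then the sum of any two of them is a sum of two squares of integers; e.g. $a+b=p^2+q^2$ for some $p,q\in\mathbb{Z}$. *)

From Stdlib Require Import ZArith.
Open Scope Z_scope.

Definition sum_two_squares (n : Z) : Prop := exists p q : Z, n = p ^ 2 + q ^ 2.

From Stdlib Require Import ZArith Znumtheory Lia.
Open Scope Z_scope.

(* Write s = a + b + c + d = 2e (the equation forces s to be even).  The
   equation then gives the factorisation
       (a + b) * (c + d) = (e - b - d)^2 + (e - b - c)^2,
   and every common divisor of the four numbers a + b, c + d, e - b - d,
   e - b - c divides 2a, 2b, 2c, 2d, hence divides 2.  So it suffices to prove
   the classical generalisation of Euler's lemma: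
     if P * R = X^2 + Y^2 with P >= 0 and every common divisor of P, R, X, Y
     divides 2, then P is a sum of two squares.
   When P, R, X, Y are all even we halve them, so only the primitive case
   (common divisors dividing 1) needs an argument.
   This is proved by strong induction on P, removing one prime factor p of P
   at a time.  If p divides both X and Y then p does not divide R, so p^2
   divides P and we divide X, Y by p.  Otherwise p divides X^2 + Y^2
   primitively, hence p is itself a sum of two squares (Fermat, proved by
   Fermat's descent) and Euler's quotient trick divides X^2 + Y^2 by p while
   keeping the coprimality.  The Brahmagupta-Fibonacci identity reassembles P.
   The theorem follows by applying this to the six pairs. *)

Lemma sum_two_squares_mul m n :
  sum_two_squares m -> sum_two_squares n -> sum_two_squares (m * n).
Proof.
  intros [p [q ->]] [r [s ->]]. exists (p * r - q * s), (p * s + q * r). ring.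
Qed.

Lemma centered_residue x m :
  0 < m -> exists u k, x = u + m * k /\ 4 * u ^ 2 <= m ^ 2.
Proof.
  intros Hm.
  pose proof (Z.div_mod x m ltac:(lia)) as Hdiv.
  pose proof (Z.mod_pos_bound x m Hm) as Hbound.
  destruct (Z_le_gt_dec (2 * (x mod m)) m).
  - exists (x mod m), (x / m). split; [lia | nia].
  - exists (x mod m - m), (x / m + 1). split; [lia | nia].
Qed.

Lemma sum_of_squares_eq_0 u v : u ^ 2 + v ^ 2 = 0 -> u = 0 /\ v = 0.
Proof. intros H. split; nia. Qed.

(* Fermat's descent: if a multiple m * p of the prime p with 0 < m < p is a
   sum of two squares, then so is a strictly smaller multiple, and finally p. *)
Lemma fermat_descent p m x y :
  prime p -> 0 < m < p -> p * m = x ^ 2 + y ^ 2 -> sum_two_squares p.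
Proof.
  intros Hp Hmp. revert x y. generalize Hmp. assert (Hm0 : 0 <= m) by lia.
  pattern m. apply Z_lt_induction; [| exact Hm0]. clear m Hmp Hm0.
  intros m IH Hmp x y Heq.
  destruct (Z.eq_dec m 1) as [-> | Hm1]; [exists x, y; lia |].
  destruct (centered_residue x m ltac:(lia)) as [u [s [Hx Hu]]].
  destruct (centered_residue y m ltac:(lia)) as [v [t [Hy Hv]]].
  (* u^2 + v^2 = m * r with 0 < r < m, and p * r is again a sum of squares *)
  set (r := p - 2 * (s * u + t * v) - m * (s ^ 2 + t ^ 2)).
  assert (Huv : u ^ 2 + v ^ 2 = m * r) by (unfold r; subst x y; lia).
  assert (Hp_r : p = r + 2 * (s * u + t * v) + m * (s ^ 2 + t ^ 2))
    by (unfold r; ring).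
  clearbody r.
  assert (Hr_lt : r < m) by (clear -Huv Hmp Hm1 Hu Hv; nia).
  assert (Hr_pos : 0 < r).
  { assert (Hr_nonneg : 0 <= r) by (clear -Huv Hmp; nia).
    destruct (Z.eq_dec r 0) as [Hr0 | Hr0]; [exfalso | lia].
    (* r = 0 would force u = v = 0, so m would be a proper divisor of p *)
    subst r. rewrite Z.mul_0_r in Huv.
    destruct (sum_of_squares_eq_0 u v Huv) as [-> ->].
    assert (Hdvd : (m | p)) by (exists (s ^ 2 + t ^ 2); rewrite Hp_r; ring).
    destruct (prime_divisors p Hp m Hdvd) as [? | [? | [? | ?]]]; lia. }
  apply (IH r ltac:(lia) ltac:(lia) (r + s * u + t * v) (s * v - t * u)).
  transitivity (r ^ 2 + 2 * r * (s * u + t * v) + (s ^ 2 + t ^ 2) * (u ^ 2 + v ^ 2));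
    [rewrite Huv, Hp_r |]; ring.
Qed.

Lemma prime_sum_two_squares p x y :
  prime p -> (p | x ^ 2 + y ^ 2) -> ~ ((p | x) /\ (p | y)) -> sum_two_squares p.
Proof.
  intros Hp [k Hk] Hprim.
  pose proof (prime_ge_2 p Hp) as Hp2.
  destruct (centered_residue x p ltac:(lia)) as [u [s [Hx Hu]]].
  destruct (centered_residue y p ltac:(lia)) as [v [t [Hy Hv]]].
  set (m := k - 2 * (s * u + t * v) - p * (s ^ 2 + t ^ 2)).
  assert (Huv : p * m = u ^ 2 + v ^ 2) by (unfold m; subst x y; lia).
  clearbody m.
  assert (Hm_nonneg : 0 <= m) by (clear -Huv Hp2; nia).
  apply (fermat_descent p m u v Hp); [| exact Huv].
  split; [| clear -Huv Hp2 Hu Hv; nia].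
  destruct (Z.eq_dec m 0) as [Hm0 | Hm0]; [exfalso | lia].
  subst m. rewrite Z.mul_0_r in Huv. symmetry in Huv.
  destruct (sum_of_squares_eq_0 u v Huv) as [-> ->].
  apply Hprim. split; [exists s | exists t]; lia.
Qed.

(* Euler's quotient, one sign choice: if p = u^2 + v^2 divides X^2 + Y^2 and
   X v - Y u, then (X^2 + Y^2) / p = A^2 + B^2 with X = A u + B v and
   Y = A v - B u, so common divisors of A and B divide X and Y. *)
Lemma euler_quotient_signed p u v X Y :
  prime p -> p = u ^ 2 + v ^ 2 -> (p | X ^ 2 + Y ^ 2) -> (p | X * v - Y * u) ->
  exists A B, X ^ 2 + Y ^ 2 = p * (A ^ 2 + B ^ 2) /\
    (forall k, (k | A) -> (k | B) -> (k | X) /\ (k | Y)).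
Proof.
  intros Hp Hpuv [N HN] [B HB].
  pose proof (prime_ge_2 p Hp) as Hp2.
  assert (Hsq : (p | (X * u + Y * v) * (X * u + Y * v))).
  { exists (N * p - B ^ 2 * p).
    transitivity ((X ^ 2 + Y ^ 2) * (u ^ 2 + v ^ 2) - (X * v - Y * u) ^ 2);
      [ring | rewrite HN, HB, <- Hpuv; ring]. }
  assert (Hlin : (p | X * u + Y * v))
    by (destruct (prime_mult p Hp _ _ Hsq); assumption).
  destruct Hlin as [A HA].
  assert (HX : X = A * u + B * v).
  { apply (Z.mul_reg_l _ _ p); [lia |].
    transitivity ((X * u + Y * v) * u + (X * v - Y * u) * v);
      [rewrite Hpuv at 1 | rewrite HA, HB]; ring. }
  assert (HY : Y = A * v - B * u).
  { apply (Z.mul_reg_l _ _ p); [lia |].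
    transitivity ((X * u + Y * v) * v - (X * v - Y * u) * u);
      [rewrite Hpuv at 1 | rewrite HA, HB]; ring. }
  exists A, B. split.
  - rewrite HX, HY, Hpuv. ring.
  - intros k HkA HkB. rewrite HX, HY.
    split; auto using Z.divide_add_r, Z.divide_sub_r, Z.divide_mul_l.
Qed.

Lemma euler_quotient p u v X Y :
  prime p -> p = u ^ 2 + v ^ 2 -> (p | X ^ 2 + Y ^ 2) ->
  exists A B, X ^ 2 + Y ^ 2 = p * (A ^ 2 + B ^ 2) /\
    (forall k, (k | A) -> (k | B) -> (k | X) /\ (k | Y)).
Proof.
  intros Hp Hpuv Hdvd.
  assert (Hprod : (p | (X * v - Y * u) * (X * v + Y * u))).
  { destruct Hdvd as [N HN]. exists (v ^ 2 * N - Y ^ 2).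
    transitivity (v ^ 2 * (X ^ 2 + Y ^ 2) - Y ^ 2 * (u ^ 2 + v ^ 2));
      [ring | rewrite HN, <- Hpuv; ring]. }
  destruct (prime_mult p Hp _ _ Hprod) as [H | H].
  - exact (euler_quotient_signed p u v X Y Hp Hpuv Hdvd H).
  - apply (euler_quotient_signed p u (- v) X Y Hp); [rewrite Hpuv; ring | exact Hdvd |].
    replace (X * - v - Y * u) with (- (X * v + Y * u)) by ring.
    now apply Z.divide_opp_r.
Qed.

Lemma exists_prime_divisor n : 1 < n -> exists p, prime p /\ (p | n).
Proof.
  intros Hn. assert (Hn0 : 0 <= n) by lia. revert Hn.
  pattern n. apply Z_lt_induction; [| exact Hn0]. clear n Hn0.
  intros n IH Hn.
  destruct (prime_dec n) as [Hp | Hp]; [exists n; auto using Z.divide_refl |].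
  destruct (not_prime_divide n Hn Hp) as [d [Hd Hdn]].
  destruct (IH d ltac:(lia) ltac:(lia)) as [p [Hprime Hpd]].
  exists p. eauto using Z.divide_trans.
Qed.

Lemma sum_two_squares_of_primitive_product P R X Y :
  0 <= P -> P * R = X ^ 2 + Y ^ 2 ->
  (forall k, (k | P) -> (k | R) -> (k | X) -> (k | Y) -> (k | 1)) ->
  sum_two_squares P.
Proof.
  intros HP. revert R X Y. generalize HP.
  pattern P. apply Z_lt_induction; [| exact HP]. clear P HP.
  intros P IH HP R X Y HPR Hprim.
  destruct (Z.eq_dec P 0) as [-> | HPne0]; [exists 0, 0; ring |].
  destruct (Z.eq_dec P 1) as [-> | HPne1]; [exists 1, 0; ring |].
  destruct (exists_prime_divisor P ltac:(lia)) as [p [Hp [P1 HP1e]]].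
  pose proof (prime_ge_2 p Hp) as Hp2.
  assert (HP1_range : 0 < P1 < P) by nia.
  assert (Hcases : ((p | X) /\ (p | Y)) \/ ~ ((p | X) /\ (p | Y))).
  { destruct (Zdivide_dec p X), (Zdivide_dec p Y); tauto. }
  destruct Hcases as [[[X1 HX] [Y1 HY]] | Hnot].
  - (* p divides X and Y, hence not R; so p^2 divides P *)
    assert (HpR : ~ (p | R)).
    { intro HpR. assert (Hp1 : (p | 1)).
      { apply Hprim; [exists P1 | | exists X1 | exists Y1]; assumption. }
      apply Z.divide_pos_le in Hp1; lia. }
    assert (HpP1 : (p | P1 * R)).
    { exists (X1 ^ 2 + Y1 ^ 2). apply (Z.mul_reg_l _ _ p); [lia |].
      transitivity (P * R); [rewrite HP1e | rewrite HPR, HX, HY]; ring. }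
    destruct (prime_mult p Hp _ _ HpP1) as [[P2 HP2] | ]; [| contradiction].
    assert (HP2_range : 0 < P2 < P) by nia.
    assert (HP2R : P2 * R = X1 ^ 2 + Y1 ^ 2).
    { apply (Z.mul_reg_l _ _ (p * p)); [lia |].
      transitivity (P * R); [rewrite HP1e, HP2 | rewrite HPR, HX, HY]; ring. }
    replace P with (P2 * (p ^ 2 + 0 ^ 2)) by (rewrite HP1e, HP2; ring).
    apply sum_two_squares_mul; [| exists p, 0; reflexivity].
    apply (IH P2 ltac:(lia) ltac:(lia) R X1 Y1 HP2R).
    intros k HkP HkR HkX HkY. apply Hprim; trivial.
    + rewrite HP1e, HP2. do 2 apply Z.divide_mul_l. exact HkP.
    + rewrite HX. now apply Z.divide_mul_l.
    + rewrite HY. now apply Z.divide_mul_l.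
  - (* p divides X^2 + Y^2 primitively: divide out p by Euler's quotient *)
    assert (Hdvd : (p | X ^ 2 + Y ^ 2)) by (exists (P1 * R); rewrite <- HPR, HP1e; ring).
    destruct (prime_sum_two_squares p X Y Hp Hdvd Hnot) as [u [v Huv]].
    destruct (euler_quotient p u v X Y Hp Huv Hdvd) as [A [B [HAB HkAB]]].
    assert (HP1R : P1 * R = A ^ 2 + B ^ 2).
    { apply (Z.mul_reg_l _ _ p); [lia |]. rewrite <- HAB, <- HPR, HP1e. ring. }
    rewrite HP1e. apply sum_two_squares_mul; [| exists u, v; exact Huv].
    apply (IH P1 ltac:(lia) ltac:(lia) R A B HP1R).
    intros k HkP HkR HkA HkB. destruct (HkAB k HkA HkB).
    apply Hprim; trivial. rewrite HP1e. now apply Z.divide_mul_l.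
Qed.

Lemma divisor_of_two k : (k | 2) -> (k | 1) \/ (2 | k).
Proof.
  intros Hk. pose proof (Zdivide_bounds k 2 Hk ltac:(lia)) as Hbound.
  assert (Hk0 : k <> 0) by (intros ->; destruct Hk as [q Hq]; lia).
  destruct (Z.abs_spec k) as [[_ Habs] | [_ Habs]]; rewrite Habs in Hbound.
  - destruct (Z.eq_dec k 1) as [-> | ]; [left; apply Z.divide_refl |].
    right. replace k with 2 by lia. apply Z.divide_refl.
  - destruct (Z.eq_dec k (-1)) as [-> | ]; [left; exists (-1); ring |].
    right. replace k with (-2) by lia. exists (-1); ring.
Qed.

(* The generalised Euler lemma still holds when the common divisors of
   P, R, X, Y are only known to divide 2: if all four are even, halve them. *)
Lemma sum_two_squares_of_product P R X Y :
  0 <= P -> P * R = X ^ 2 + Y ^ 2 ->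
  (forall k, (k | P) -> (k | R) -> (k | X) -> (k | Y) -> (k | 2)) ->
  sum_two_squares P.
Proof.
  intros HP HPR Hcommon.
  assert (Hcases : ((2 | P) /\ (2 | R) /\ (2 | X) /\ (2 | Y)) \/
                   ~ ((2 | P) /\ (2 | R) /\ (2 | X) /\ (2 | Y))).
  { destruct (Zdivide_dec 2 P), (Zdivide_dec 2 R), (Zdivide_dec 2 X),
      (Zdivide_dec 2 Y); tauto. }
  destruct Hcases as [[[P1 HP1] [[R1 HR1] [[X1 HX1] [Y1 HY1]]]] | Hodd].
  -
    replace P with (P1 * (1 ^ 2 + 1 ^ 2)) by (rewrite HP1; ring).
    apply sum_two_squares_mul; [| exists 1, 1; reflexivity].
    apply (sum_two_squares_of_primitive_product P1 R1 X1 Y1); [lia | nia |].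
    intros k HkP HkR HkX HkY.
    apply (Z.mul_divide_cancel_l k 1 2 ltac:(lia)). rewrite Z.mul_1_r.
    apply Hcommon; [rewrite HP1 | rewrite HR1 | rewrite HX1 | rewrite HY1];
      rewrite (Z.mul_comm _ 2); now apply Z.mul_divide_mono_l.
  - (* otherwise no common divisor is even, so all common divisors are units *)
    apply (sum_two_squares_of_primitive_product P R X Y HP HPR).
    intros k HkP HkR HkX HkY.
    destruct (divisor_of_two k (Hcommon k HkP HkR HkX HkY)) as [| H2k];
      [assumption | exfalso].
    apply Hodd. repeat split; eauto using Z.divide_trans.
Qed.

Lemma divides_two_of_divides_doubles a b c d k :
  (forall l, (l | a) -> (l | b) -> (l | c) -> (l | d) -> (l | 1)) ->
  (k | 2 * a) -> (k | 2 * b) -> (k | 2 * c) -> (k | 2 * d) -> (k | 2).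
Proof.
  intros Hcoprime Ha Hb Hc Hd.
  assert (Hk : (k | Z.gcd (Z.gcd (2 * a) (2 * b)) (Z.gcd (2 * c) (2 * d))))
    by (repeat apply Z.gcd_greatest; assumption).
  rewrite !Z.gcd_mul_mono_l in Hk.
  set (g := Z.gcd (Z.gcd a b) (Z.gcd c d)) in Hk.
  assert (Hg : g = 1).
  { apply Z.divide_1_r_nonneg; [apply Z.gcd_nonneg |]. apply Hcoprime;
      eauto using Z.divide_trans, Z.gcd_divide_l, Z.gcd_divide_r. }
  rewrite Hg in Hk. exact Hk.
Qed.

(* The statement for the pair (a, b): with a + b + c + d = 2e we have
   (a + b)(c + d) = (e - b - d)^2 + (e - b - c)^2. *)
Lemma pair_sum_two_squares a b c d : 0 <= a -> 0 <= b ->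
  (forall k, (k | a) -> (k | b) -> (k | c) -> (k | d) -> (k | 1)) ->
  (a + b + c + d) ^ 2 = 2 * (a ^ 2 + b ^ 2 + c ^ 2 + d ^ 2) ->
  sum_two_squares (a + b).
Proof.
  intros Ha Hb Hcoprime Heq.
  assert (Hsum_even : (2 | a + b + c + d)).
  { assert (Hsq_even : (2 | (a + b + c + d) * (a + b + c + d)))
      by (exists (a ^ 2 + b ^ 2 + c ^ 2 + d ^ 2); rewrite <- Z.pow_2_r, Heq; ring).
    destruct (prime_mult 2 prime_2 _ _ Hsq_even); assumption. }
  destruct Hsum_even as [e He].
  set (X := e - b - d). set (Y := e - b - c).
  apply (sum_two_squares_of_product (a + b) (c + d) X Y); [lia | |].
  - (* 4 (a + b)(c + d) = (2X)^2 + (2Y)^2 is the equation in disguise *)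
    apply (Z.mul_reg_l _ _ 4); [lia |].
    transitivity ((a + c - b - d) ^ 2 + (a + d - b - c) ^ 2); [lia |].
    replace (a + c - b - d) with (2 * X) by (unfold X; lia).
    replace (a + d - b - c) with (2 * Y) by (unfold Y; lia).
    ring.
  - intros k HkP HkR HkX HkY.
    apply (divides_two_of_divides_doubles a b c d k Hcoprime).
    + replace (2 * a) with (a + b + X + Y) by (unfold X, Y; lia).
      auto using Z.divide_add_r.
    + replace (2 * b) with (a + b - X - Y) by (unfold X, Y; lia).
      auto using Z.divide_sub_r.
    + replace (2 * c) with (c + d + X - Y) by (unfold X, Y; lia).
      auto using Z.divide_add_r, Z.divide_sub_r.
    + replace (2 * d) with (c + d - X + Y) by (unfold X, Y; lia).
      auto using Z.divide_add_r, Z.divide_sub_r.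
Qed.

Theorem proposition1 (a b c d : Z)
  (ha : 0 <= a) (hb : 0 <= b) (hc : 0 <= c) (hd : 0 <= d)
  (hgcd : Z.gcd (Z.gcd a b) (Z.gcd c d) = 1)
  (heq : (a + b + c + d) ^ 2 = 2 * (a ^ 2 + b ^ 2 + c ^ 2 + d ^ 2)) :
  sum_two_squares (a + b) /\ sum_two_squares (a + c) /\ sum_two_squares (a + d) /\
  sum_two_squares (b + c) /\ sum_two_squares (b + d) /\ sum_two_squares (c + d).
Proof.
  (* coprimality and the equation are symmetric in a, b, c, d *)
  assert (Hcoprime : forall k, (k | a) -> (k | b) -> (k | c) -> (k | d) -> (k | 1)).
  { intros k Ha Hb Hc Hd. rewrite <- hgcd. repeat apply Z.gcd_greatest; assumption. }
  assert (Hsym : forall x y z w, x + y + z + w = a + b + c + d ->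
    x ^ 2 + y ^ 2 + z ^ 2 + w ^ 2 = a ^ 2 + b ^ 2 + c ^ 2 + d ^ 2 ->
    (x + y + z + w) ^ 2 = 2 * (x ^ 2 + y ^ 2 + z ^ 2 + w ^ 2)).
  { intros x y z w -> ->. exact heq. }
  repeat split.
  - apply (pair_sum_two_squares a b c d); auto.
  - apply (pair_sum_two_squares a c b d); auto; apply Hsym; ring.
  - apply (pair_sum_two_squares a d b c); auto; apply Hsym; ring.
  - apply (pair_sum_two_squares b c a d); auto; apply Hsym; ring.
  - apply (pair_sum_two_squares b d a c); auto; apply Hsym; ring.
  - apply (pair_sum_two_squares c d a b); auto; apply Hsym; ring.
Qed.
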